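(* Let $R$ be a reflexive relation on $U$. The set of atoms of $\mathrm{DM(RS)}$ is $\{(\{x\}^{\blacktriangledown},\{x\}^{\blacktriangle})\mid x\in U,\ \{x\}^{\blacktriangle}\text{ is an atom of }\wp(U)^{\blacktriangle}\}$.
   Context: Let $U$ be a set and $R\subseteq U\times U$ a binary relation. For $x\in U$, $R(x)=\{y\in U\mid (x,y)\in R\}$ and $\breve R(x)=\{y\in U\mid (y,x)\in R\}$. For $X\subseteq U$: $X^{\blacktriangledown}=\{x\in U\mid R(x)\subseteq X\}$, $X^{\blacktriangle}=\{x\in U\mid R(x)\cap X\neq\emptyset\}$, $X^{\triangledown}=\{x\in U\mid \breve R(x)\subseteq X\}$, $X^{\vartriangle}=\{x\in U\mid \breve R(x)\cap X\neq\emptyset\}$; composites like $X^{\vartriangle\blacktriangledown}$ mean $(X^{\vartriangle})^{\blacktriangledown}$. $\wp(U)^{\blacktriangledown}=\{X^{\blacktriangledown}\mid X\subseteq U\}$, $\wp(U)^{\blacktriangle}=\{X^{\blacktriangle}\mid X\subseteq U\}$, complete lattices under $\subseteq$ with least element $\emptyset$. $\mathcal S=\{x\in U\mid |R(x)|=1\}$. $\mathrm{RS}=\{(X^{\blacktriangledown},X^{\blacktriangle})\mid X\subseteq U\}$ ordered coordinatewise; $\mathrm{DM(RS)}$ is its Dedekind–MacNeille completion, identified with $\{(A,B)\in\wp(U)^{\blacktriangledown}\times\wp(U)^{\blacktriangle}\mid A^{\vartriangle\blacktriangle}\subseteq B,\ A\cap\mathcal S=B\cap\mathcal S\}$ ordered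 coordinatewise (least element $(\emptyset,\emptyset)$), with meets $\bigwedge_i(X_i,Y_i)=(\bigcap_iX_i,(\bigcap_iY_i)^{\triangledown\blacktriangle})$ and joins $\bigvee_i(X_i,Y_i)=((\bigcup_iX_i)^{\vartriangle\blacktriangledown},\bigcup_iY_i)$. An atom of a lattice with least element $0$ is an element covering $0$. *)

(* subsets of U are predicates U -> Prop, compared extensionally. *)
Set Implicit Arguments.

Section Rough.
Variable U : Type.
Variable R : U -> U -> Prop.

Definition subset (X Y : U -> Prop) : Prop := forall x, X x -> Y x.
Definition seteq (X Y : U -> Prop) : Prop := forall x, X x <-> Y x.
Definition empty : U -> Prop := fun _ => False.
Definition single (x : U) : U -> Prop := fun y => y = x.

Definition lowR (X : U -> Prop) : U -> Prop := fun x => forall y, R x y -> X y.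
Definition upR (X : U -> Prop) : U -> Prop := fun x => exists y, R x y /\ X y.
Definition lowRi (X : U -> Prop) : U -> Prop := fun x => forall y, R y x -> X y.
Definition upRi (X : U -> Prop) : U -> Prop := fun x => exists y, R y x /\ X y.

Definition Sing : U -> Prop := fun x => exists y, R x y /\ forall z, R x z -> z = y.

(* membership in ℘(U)^▼ and ℘(U)^▲ (up to extensional equality of sets) *)
Definition in_low_sets (A : U -> Prop) : Prop := exists X, seteq A (lowR X).
Definition in_up_sets (B : U -> Prop) : Prop := exists X, seteq B (upR X).

Definition atom_up (B : U -> Prop) : Prop :=
  in_up_sets B /\ ~ subset B empty /\
  forall C, in_up_sets C -> subset C B -> subset C empty \/ subset B C.

Definition inDM (p : (U -> Prop) * (U -> Prop)) : Prop :=
  let (A, B) := p in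
  in_low_sets A /\ in_up_sets B /\ subset (upR (upRi A)) B /\
  (forall x, Sing x -> (A x <-> B x)).

Definition leDM (p q : (U -> Prop) * (U -> Prop)) : Prop :=
  subset (fst p) (fst q) /\ subset (snd p) (snd q).

Definition botDM : (U -> Prop) * (U -> Prop) := (empty, empty).

Definition atomDM (p : (U -> Prop) * (U -> Prop)) : Prop :=
  inDM p /\ ~ leDM p botDM /\
  forall q, inDM q -> leDM q p -> leDM q botDM \/ leDM p q.

End Rough.

(* Every set in ℘(U)^▲ is the union of the sets {y}^▲ it contains.  Since R is
   reflexive, x lies in {x}^▲ and every (A, B) in DM(RS) has A ⊆ B.  Moreover (A, B) lies above ({y}^▼, {y}^▲) as soon as
   {y}^▲ ⊆ B: an element of {y}^▼ is y itself, which lies in S.  Hence a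
   nonzero element of DM(RS) lies above some ({y}^▼, {y}^▲), so an atom is one
   of these pairs, and then {y}^▲ must be an atom of ℘(U)^▲; conversely an atom
   {x}^▲ of ℘(U)^▲ leaves no room for a nonzero element strictly below
   ({x}^▼, {x}^▲). *)
From Stdlib Require Import Classical.

Set Implicit Arguments.

Section ReflexiveRoughSets.
Variable U : Type.
Variable R : U -> U -> Prop.
Hypothesis Rrefl : forall x : U, R x x.

Definition singleDM (x : U) : (U -> Prop) * (U -> Prop) :=
  (lowR R (single x), upR R (single x)).

Lemma upR_single_refl x : upR R (single x) x.
Proof. exists x; split; [apply Rrefl | reflexivity]. Qed.

Lemma lowR_single_eq x z : lowR R (single x) z -> z = x.
Proof. intros Hz; exact (Hz z (Rrefl z)). Qed.

Lemma in_low_sets_lowR X : in_low_sets R (lowR R X).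
Proof. exists X; intro; tauto. Qed.

Lemma in_up_sets_upR X : in_up_sets R (upR R X).
Proof. exists X; intro; tauto. Qed.

Lemma in_up_sets_cover B b :
  in_up_sets R B -> B b ->
  exists y, upR R (single y) b /\ subset (upR R (single y)) B.
Proof.
  intros [X HX] Hb.
  destruct (proj1 (HX b) Hb) as [y [Hby Xy]].
  exists y; split.
  - exists y; split; [exact Hby | reflexivity].
  - intros w [t [Hwt ->]]; apply HX; exists y; split; assumption.
Qed.

Lemma inDM_fst_sub_snd A B : inDM R (A, B) -> subset A B.
Proof.
  intros [_ [_ [HAB _]]] a Ha; apply HAB.
  exists a; split; [apply Rrefl |].
  exists a; split; [apply Rrefl | exact Ha].
Qed.

Lemma inDM_leDM_bot A B :
  inDM R (A, B) -> subset B (empty (U:=U)) -> leDM (A, B) (botDM U).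
Proof.
  intros Hdm HB; split; [| exact HB].
  intros a Ha; apply HB; exact (inDM_fst_sub_snd Hdm a Ha).
Qed.

Lemma singleDM_not_bot x : ~ leDM (singleDM x) (botDM U).
Proof. intros [_ Hb]; exact (Hb x (upR_single_refl x)). Qed.

Lemma inDM_singleDM x : inDM R (singleDM x).
Proof.
  split; [apply in_low_sets_lowR | split; [apply in_up_sets_upR | split]].
  - intros w [z [Hwz [v [Hvz Hv]]]].
    exists z; split; [exact Hwz | exact (Hv z Hvz)].
  - intros s [t [Hst Ht]]; split.
    + intros Hs; exists s; split; [apply Rrefl | exact (Hs s (Rrefl s))].
    + intros [u [Hsu Hu]] v Hsv.
      rewrite (Ht v Hsv), <- (Ht u Hsu); exact Hu.
Qed.

Lemma inDM_seteq A B A' B' :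
  seteq A A' -> seteq B B' -> inDM R (A', B') -> inDM R (A, B).
Proof.
  intros HA HB [[X HX] [[Y HY] [HAB HS]]].
  split; [| split; [| split]].
  - exists X; intro z; rewrite (HA z); apply HX.
  - exists Y; intro z; rewrite (HB z); apply HY.
  - intros w [z [Hwz [v [Hvz Hv]]]]; apply HB, HAB.
    exists z; split; [exact Hwz |].
    exists v; split; [exact Hvz | apply HA, Hv].
  - intros z Hz; rewrite (HA z), (HB z); auto.
Qed.

Lemma singleDM_le A B y :
  inDM R (A, B) -> subset (upR R (single y)) B -> leDM (singleDM y) (A, B).
Proof.
  intros [_ [_ [_ HS]]] Hy; split; [| exact Hy].
  intros z Hz; simpl in Hz.
  assert (Hzy : z = y) by exact (lowR_single_eq Hz).
  subst z; apply HS.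
  - exists y; split; [apply Rrefl | exact Hz].
  - exact (Hy y (upR_single_refl y)).
Qed.

Lemma atomDM_le_singleDM p y :
  atomDM R p -> subset (upR R (single y)) (snd p) -> leDM p (singleDM y).
Proof.
  destruct p as [A B]; intros [Hdm [_ Hcov]] Hy.
  destruct (Hcov _ (inDM_singleDM y) (singleDM_le Hdm Hy)) as [Hbot | Hle].
  - contradiction (singleDM_not_bot Hbot).
  - exact Hle.
Qed.

Lemma atom_up_of_atomDM p y :
  atomDM R p -> subset (upR R (single y)) (snd p) -> atom_up R (upR R (single y)).
Proof.
  intros Hat Hy.
  split; [apply in_up_sets_upR | split].
  - intros H0; exact (H0 y (upR_single_refl y)).
  - intros C HC HCy.
    destruct (classic (exists c, C c)) as [[c Hc] | HCe].
    + right.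
      destruct (in_up_sets_cover c HC Hc) as [z [_ Hz]].
      assert (HzB : subset (upR R (single z)) (snd p))
        by (intros w Hw; exact (Hy w (HCy w (Hz w Hw)))).
      destruct (atomDM_le_singleDM Hat HzB) as [_ HBz].
      intros w Hw; exact (Hz w (HBz w (Hy w Hw))).
    + left; intros c Hc; exact (HCe (ex_intro _ c Hc)).
Qed.

Lemma atomDM_of_atom_up A B x :
  atom_up R (upR R (single x)) ->
  seteq A (lowR R (single x)) -> seteq B (upR R (single x)) ->
  atomDM R (A, B).
Proof.
  intros [_ [_ Hcov]] HA HB.
  assert (Hdm : inDM R (A, B)) by exact (inDM_seteq HA HB (inDM_singleDM x)).
  split; [exact Hdm | split].
  - intros [_ Hb]; exact (Hb x (proj2 (HB x) (upR_single_refl x))).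
  - intros [C D] Hq [HC HD]; simpl in HC, HD.
    pose proof Hq as [_ [HDup _]].
    destruct (Hcov D HDup (fun z Hz => proj1 (HB z) (HD z Hz))) as [HD0 | HxD].
    + left; exact (inDM_leDM_bot Hq HD0).
    + right.
      destruct (singleDM_le Hq HxD) as [HxC _].
      split; intros z Hz; [apply HxC, HA | apply HxD, HB]; exact Hz.
Qed.

End ReflexiveRoughSets.

Theorem mainTheorem3 (U : Type) (R : U -> U -> Prop)
  (Hrefl : forall x : U, R x x) :
  forall p : (U -> Prop) * (U -> Prop),
    atomDM R p <->
    exists x : U, atom_up R (upR R (single x)) /\
      seteq (fst p) (lowR R (single x)) /\ seteq (snd p) (upR R (single x)).
Proof.
  intros [A B]; split.
  - intros Hat.
    pose proof Hat as [Hdm [Hnbot _]].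
    assert (HBne : exists b, B b).
    { apply NNPP; intros HBe; apply Hnbot, (inDM_leDM_bot Hrefl Hdm).
      intros b Hb; exact (HBe (ex_intro _ b Hb)). }
    destruct HBne as [b Hb].
    destruct (in_up_sets_cover b (proj1 (proj2 Hdm)) Hb) as [y [_ Hy]].
    destruct (atomDM_le_singleDM Hrefl Hat Hy) as [HAy HBy].
    destruct (singleDM_le Hrefl Hdm Hy) as [HyA HyB].
    exists y; split; [exact (atom_up_of_atomDM Hrefl Hat Hy) |].
    split; intro z; split; [apply HAy | apply HyA | apply HBy | apply HyB].
  - intros [x [Hat [HA HB]]].
    exact (atomDM_of_atom_up Hrefl Hat HA HB).
Qed.
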